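(* Let $\{(\mathbf{x}^k,\mathbf{r}^k,\boldsymbol{\lambda}^k)\}$ be generated by Algorithm 1 and $k\ge 0$. Then for any $\mathbf{x}$ independent of $i_k$ with $\mathbf{A}\mathbf{x}=\mathbf{b}$, $$\begin{aligned}&\mathbb{E}_{i_k}\Big[F(\mathbf{x}^{k+1})-F(\mathbf{x})-\langle\boldsymbol{\lambda}^{k+1},\mathbf{r}^{k+1}\rangle+(\beta-\rho)\|\mathbf{r}^{k+1}\|^2-\tfrac{\beta}{2}\|\mathbf{r}^{k+1}\|^2\Big]+\tfrac12\mathbb{E}_{i_k}\Big[\|\mathbf{x}^{k+1}-\mathbf{x}\|_{\mathbf{P}}^2+\|\mathbf{x}^{k+1}-\mathbf{x}^k\|_{\mathbf{P}-\mathbf{L}-\beta\mathbf{A}^\top\mathbf{A}}^2\Big]\\ &\le\Big(1-\frac1m\Big)\Big[F(\mathbf{x}^k)-F(\mathbf{x})-\langle\boldsymbol{\lambda}^k,\mathbf{r}^k\rangle+\beta\|\mathbf{r}^k\|^2\Big]-\tfrac{\beta}{2}\|\mathbf{r}^k\|^2+\tfrac12\|\mathbf{x}^k-\mathbf{x}\|_{\mathbf{P}}^2,\end{aligned}$$ where $\mathbf{P}=\mathrm{blkdiag}(\mathbf{P}_1,\ldots,\mathbf{P}_m)$ (here $\|\mathbf{z}\|_{\mathbf{M}}^2:=\mathbf{z}^\top\mathbf{M}\mathbf{z}$ for any symmetric $\mathbf{M}$).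
   Context: Problem: $\min_{\mathbf{x}} F(\mathbf{x}):=f(\mathbf{x})+g(\mathbf{x})$ s.t. $\mathbf{A}\mathbf{x}=\mathbf{b}$, where $\mathbf{x}=(\mathbf{x}_1;\ldots;\mathbf{x}_m)$ with blocks $\mathbf{x}_i\in\mathbb{R}^{n_i}$, $g(\mathbf{x})=\sum_{i=1}^m g_i(\mathbf{x}_i)$, $\mathbf{A}=[\mathbf{A}_1,\ldots,\mathbf{A}_m]$ with $\mathbf{A}_i\in\mathbb{R}^{q\times n_i}$, $\mathbf{b}\in\mathbb{R}^q$; $f$ is convex and continuously differentiable, each $g_i$ is proper, convex, lower semicontinuous. $\nabla_i f$ denotes the partial gradient w.r.t. block $i$; $\mathbf{U}_i\mathbf{y}$ denotes the vector whose $i$-th block is $\mathbf{y}_i$ and other blocks zero. Assumption (gradient Lipschitz continuity): there are constants $L_i>0$ and $L_r$ with $\|\nabla_i f(\mathbf{x}+\mathbf{U}_i\mathbf{y})-\nabla_i f(\mathbf{x})\|\le L_i\|\mathbf{y}_i\|$ and $\|\nabla f(\mathbf{x}+\mathbf{U}_i\mathbf{y})-\nabla f(\mathbf{x})\|\le L_r\|\mathbf{y}_i\|$ for all $i,\mathbf{x},\mathbf{y}$. $\mathbf{L}=\mathrm{blkdiag}(L_1\mathbf{I}_{n_1},\ldots,L_m\mathbf{I}_{n_m})$. Algorithm 1 (randomized primal-dual block update): choose $\mathbf{x}^0$, set $\boldsymbol{\lambda}^0=\mathbf{0}$, $\mathbf{r}^0=\mathbf{A}\mathbf{x}^0-\mathbf{b}$,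 parameters $\beta>0,\rho>0$, symmetric PSD matrices $\mathbf{P}_i\in\mathbb{R}^{n_i\times n_i}$. For $k=0,1,\ldots$: pick $i_k\in\{1,\ldots,m\}$ uniformly at random, independent of $i_0,\ldots,i_{k-1}$; set $\mathbf{x}_i^{k+1}=\mathbf{x}_i^k$ for $i\ne i_k$ and $$\mathbf{x}_{i_k}^{k+1}\in\arg\min_{\mathbf{x}_{i_k}}\big\langle\nabla_{i_k} f(\mathbf{x}^k)-\mathbf{A}_{i_k}^\top(\boldsymbol{\lambda}^k-\beta\mathbf{r}^k),\mathbf{x}_{i_k}\big\rangle+g_{i_k}(\mathbf{x}_{i_k})+\tfrac12\|\mathbf{x}_{i_k}-\mathbf{x}_{i_k}^k\|_{\mathbf{P}_{i_k}}^2;$$ then $\mathbf{r}^{k+1}=\mathbf{r}^k+\mathbf{A}_{i_k}(\mathbf{x}_{i_k}^{k+1}-\mathbf{x}_{i_k}^k)$ (so $\mathbf{r}^k=\mathbf{A}\mathbf{x}^k-\mathbf{b}$) and $\boldsymbol{\lambda}^{k+1}=\boldsymbol{\lambda}^k-\rho\mathbf{r}^{k+1}$. $\mathbb{E}_{i_k}$ denotes expectation over $i_k$ conditional on $i_0,\ldots,i_{k-1}$; ''$\mathbf{x}$ independent of $i_k$'' means $\mathbf{x}$ is determined by $i_0,\ldots,i_{k-1}$ (e.g. deterministic). *)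

From Stdlib Require Import Reals.
From mathcomp Require Import ssreflect ssrfun ssrbool eqtype ssrnat seq fintype bigop.
Set Implicit Arguments. Unset Printing Implicit Defensive.
Open Scope R_scope.

Definition sumo (k : nat) (F : 'I_k -> R) : R := \big[Rplus/R0]_(i < k) F i.

Definition vec (k : nat) := 'I_k -> R.
Definition ipv (k : nat) (u v : vec k) : R := sumo (fun a => u a * v a).
Definition normv (k : nat) (u : vec k) : R := sqrt (ipv u u).
Definition vadd (k : nat) (u v : vec k) : vec k := fun a => u a + v a.
Definition vsub (k : nat) (u v : vec k) : vec k := fun a => u a - v a.
Definition vscale (k : nat) (t : R) (u : vec k) : vec k := fun a => t * u a.
Definition qformv (k : nat) (M : 'I_k -> 'I_k -> R) (v : vec k) : R :=
  sumo (fun a => sumo (fun c => v a * M a c * v c)).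

Definition bvec (m : nat) (n : 'I_m -> nat) := forall i : 'I_m, vec (n i).
Definition ipb (m : nat) (n : 'I_m -> nat) (x y : bvec n) : R :=
  sumo (fun i => ipv (x i) (y i)).
Definition normb (m : nat) (n : 'I_m -> nat) (x : bvec n) : R := sqrt (ipb x x).
Definition badd (m : nat) (n : 'I_m -> nat) (x y : bvec n) : bvec n :=
  fun i a => x i a + y i a.
Definition bsub (m : nat) (n : 'I_m -> nat) (x y : bvec n) : bvec n :=
  fun i a => x i a - y i a.
Definition bscale (m : nat) (n : 'I_m -> nat) (t : R) (x : bvec n) : bvec n :=
  fun i a => t * x i a.

Definition setblk (m : nat) (n : 'I_m -> nat) (x : bvec n) (i : 'I_m)
  (v : vec (n i)) : bvec n :=
  fun j => match @eqP _ i j with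
           | ReflectT e => eq_rect i (fun k => vec (n k)) v j e
           | ReflectF _ => x j
           end.
(* x + U_i y  (only block i of y matters, so y is given as y_i) *)
Definition addblk (m : nat) (n : 'I_m -> nat) (x : bvec n) (i : 'I_m)
  (y : vec (n i)) : bvec n := setblk x i (vadd (x i) y).

Definition bmat (m : nat) (n : 'I_m -> nat) :=
  forall i j : 'I_m, 'I_(n i) -> 'I_(n j) -> R.
Definition qformb (m : nat) (n : 'I_m -> nat) (M : bmat n) (x : bvec n) : R :=
  sumo (fun i => sumo (fun j => sumo (fun a => sumo (fun c =>
     x i a * M i j a c * x j c)))).
Definition bmsub (m : nat) (n : 'I_m -> nat) (M N : bmat n) : bmat n :=
  fun i j a c => M i j a c - N i j a c.
Definition bmscale (m : nat) (n : 'I_m -> nat) (t : R) (M : bmat n) : bmat n :=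
  fun i j a c => t * M i j a c.
Definition blkdiag (m : nat) (n : 'I_m -> nat)
  (D : forall i : 'I_m, 'I_(n i) -> 'I_(n i) -> R) : bmat n :=
  fun i j a c => match @eqP _ i j with
                 | ReflectT e => D i a (eq_rect j (fun k => 'I_(n k)) c i (esym e))
                 | ReflectF _ => 0
                 end.
Definition Lmat (m : nat) (n : 'I_m -> nat) (Lc : 'I_m -> R) : bmat n :=
  @blkdiag m n (fun (i : 'I_m) (a c : 'I_(n i)) => if a == c then Lc i else 0).

(* A = [A_1, ..., A_m], A_i in R^{q x n_i}; stored as A i l a = (A_i)_{l a} *)
Definition blkA (m : nat) (n : 'I_m -> nat) (q : nat) :=
  forall i : 'I_m, 'I_q -> 'I_(n i) -> R.
Definition Amul (m : nat) (n : 'I_m -> nat) (q : nat) (A : blkA n q) (x : bvec n)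
  : vec q := fun l => sumo (fun i => sumo (fun a => A i l a * x i a)).
Definition Aimul (m : nat) (n : 'I_m -> nat) (q : nat) (A : blkA n q) (i : 'I_m)
  (v : vec (n i)) : vec q := fun l => sumo (fun a => A i l a * v a).
Definition AiT (m : nat) (n : 'I_m -> nat) (q : nat) (A : blkA n q) (i : 'I_m)
  (w : vec q) : vec (n i) := fun a => sumo (fun l => A i l a * w l).
Definition AtA (m : nat) (n : 'I_m -> nat) (q : nat) (A : blkA n q) : bmat n :=
  fun i j a c => sumo (fun l => A i l a * A j l c).

Definition convex_fun (m : nat) (n : 'I_m -> nat) (f : bvec n -> R) : Prop :=
  forall x y t, 0 <= t <= 1 ->
    f (badd (bscale t x) (bscale (1 - t) y)) <= t * f x + (1 - t) * f y.
Definition has_gradient (m : nat) (n : 'I_m -> nat) (f : bvec n -> R)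
  (gradf : bvec n -> bvec n) : Prop :=
  forall x eps, 0 < eps -> exists delta, 0 < delta /\
    forall h, normb h < delta ->
      Rabs (f (badd x h) - f x - ipb (gradf x) h) <= eps * normb h.
Definition continuous_grad (m : nat) (n : 'I_m -> nat) (gradf : bvec n -> bvec n)
  : Prop :=
  forall x eps, 0 < eps -> exists delta, 0 < delta /\
    forall y, normb (bsub y x) < delta -> normb (bsub (gradf y) (gradf x)) < eps.
Definition grad_lipschitz (m : nat) (n : 'I_m -> nat) (gradf : bvec n -> bvec n)
  (Lc : 'I_m -> R) (Lr : R) : Prop :=
  (forall i, 0 < Lc i) /\
  (forall (x : bvec n) (i : 'I_m) (y : vec (n i)),
     normv (vsub (gradf (addblk x i y) i) (gradf x i)) <= Lc i * normv y) /\
  (forall (x : bvec n) (i : 'I_m) (y : vec (n i)),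
     normb (bsub (gradf (addblk x i y)) (gradf x)) <= Lr * normv y).

(* ---------- extended-valued g_i : R^k -> R U {+oo} ----------
   represented by a domain predicate dom and a real value g on dom
   (g = +oo outside dom). *)
Definition proper_ext (k : nat) (dom : vec k -> Prop) : Prop := exists y, dom y.
Definition convex_ext (k : nat) (dom : vec k -> Prop) (g : vec k -> R) : Prop :=
  forall y z t, dom y -> dom z -> 0 <= t <= 1 ->
    dom (vadd (vscale t y) (vscale (1 - t) z)) /\
    g (vadd (vscale t y) (vscale (1 - t) z)) <= t * g y + (1 - t) * g z.
(* lower semicontinuity: for u_t -> y and every M < g(y) (M arbitrary if
   g(y) = +oo), eventually M < g(u_t) (automatic when u_t is outside dom). *)
Definition lsc_ext (k : nat) (dom : vec k -> Prop) (g : vec k -> R) : Prop :=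
  forall (y : vec k) (u : nat -> vec k),
    (forall a, Un_cv (fun t => u t a) (y a)) ->
    forall M, (dom y -> M < g y) ->
      exists N, forall t, (N <= t)%nat -> dom (u t) -> M < g (u t).

Definition sym_psd (k : nat) (M : 'I_k -> 'I_k -> R) : Prop :=
  (forall a c, M a c = M c a) /\ (forall v, 0 <= qformv M v).

Definition Fobj (m : nat) (n : 'I_m -> nat) (f : bvec n -> R)
  (g : forall i : 'I_m, vec (n i) -> R) (x : bvec n) : R :=
  f x + sumo (fun i => g i (x i)).

Record state (m : nat) (n : 'I_m -> nat) (q : nat) :=
  St { sx : bvec n; sr : vec q; sl : vec q }.

Definition subobj (m : nat) (n : 'I_m -> nat) (q : nat)
  (gradf : bvec n -> bvec n) (g : forall i : 'I_m, vec (n i) -> R)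
  (A : blkA n q) (beta : R) (P : forall i : 'I_m, 'I_(n i) -> 'I_(n i) -> R)
  (s : state n q) (i : 'I_m) (u : vec (n i)) : R :=
  ipv (vsub (gradf (sx s) i)
            (AiT A i (vsub (sl s) (vscale beta (sr s))))) u
  + g i u + / 2 * qformv (P i) (vsub u (sx s i)).

(* z is a minimizer (over R^(n i), with g_i = +oo off dom i) *)
Definition is_argmin_blk (m : nat) (n : 'I_m -> nat) (q : nat)
  (gradf : bvec n -> bvec n) (g : forall i : 'I_m, vec (n i) -> R)
  (dom : forall i : 'I_m, vec (n i) -> Prop)
  (A : blkA n q) (beta : R) (P : forall i : 'I_m, 'I_(n i) -> 'I_(n i) -> R)
  (s : state n q) (i : 'I_m) (z : vec (n i)) : Prop :=
  dom i z /\
  forall u, dom i u -> subobj gradf g A beta P s i z <= subobj gradf g A beta P s i u.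

Definition alg_step (m : nat) (n : 'I_m -> nat) (q : nat)
  (A : blkA n q) (rho : R) (s : state n q) (i : 'I_m) (z : vec (n i))
  : state n q :=
  let x1 := setblk (sx s) i z in
  let r1 := vadd (sr s) (Aimul A i (vsub z (sx s i))) in
  let l1 := vsub (sl s) (vscale rho r1) in
  St x1 r1 l1.

(* iterate after the index history h (most recent index first);
   sel h i is the minimizer chosen when i is drawn after history h *)
Fixpoint alg_traj (m : nat) (n : 'I_m -> nat) (q : nat)
  (A : blkA n q) (b : vec q) (rho : R) (x0 : bvec n)
  (sel : seq 'I_m -> forall i : 'I_m, vec (n i)) (h : seq 'I_m) : state n q :=
  match h with
  | [::] => St x0 (vsub (Amul A x0) b) (fun _ => 0)
  | i :: h' => alg_step A rho (alg_traj A b rho x0 sel h') i (sel h' i)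
  end.

(* conditional expectation over i_k uniform on {1..m} *)
Definition Eunif (m : nat) (Q : 'I_m -> R) : R := / INR m * sumo Q.

(* Fix the drawn block i and let d = x_i^{k+1} - x_i^k.  The block descent
   lemma bounds f(x^{k+1}), the three-point property of the proximal block
   subproblem compares its minimizer with x_i, and the updates
   r^{k+1} = r^k + A_i d, λ^{k+1} = λ^k - ρ r^{k+1} rewrite the multiplier and
   residual terms at step k.  Together they bound the quantity inside the
   expectation by F(x^k) - F(x) - <λ^k, r^k> + β/2 |r^k|^2 + 1/2 |x^k - x|_P^2
   plus the block-i part of the linearized gap
   <∇f(x^k) - A^T (λ^k - β r^k), x - x^k> + g(x) - g(x^k).  Averaging over i
   sums these parts to the whole gap, which convexity of f, A x = b and
   r^k = A x^k - b bound by -(F(x^k) - F(x) - <λ^k, r^k> + β |r^k|^2); the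
   factor 1/m in front of it produces the 1 - 1/m. *)

From HB Require Import structures.
From Stdlib Require Import Reals Lra Psatz FunctionalExtensionality.
From mathcomp Require Import ssreflect ssrfun ssrbool eqtype ssrnat seq fintype bigop.
Set Implicit Arguments.
Open Scope R_scope.

HB.instance Definition _ := Monoid.isComLaw.Build R R0 Rplus
  (fun a b c => esym (Rplus_assoc a b c)) Rplus_comm Rplus_0_l.

Section FiniteSums.
Variable k : nat.
Implicit Types F G : 'I_k -> R.

Lemma eq_sumo F G : (forall i, F i = G i) -> sumo F = sumo G.
Proof. by move=> FG; apply: eq_bigr => i _. Qed.

Lemma sumoD F G : sumo (fun i => F i + G i) = sumo F + sumo G.
Proof. exact: big_split. Qed.

Lemma sumoZ c F : sumo (fun i => c * F i) = c * sumo F.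
Proof. by rewrite /sumo; elim/big_rec2: _ => [|i y1 y2 _ ->]; ring. Qed.

Lemma sumoB F G : sumo (fun i => F i - G i) = sumo F - sumo G.
Proof.
have -> : sumo (fun i => F i - G i) = sumo (fun i => F i + -1 * G i).
  by apply: eq_sumo => i; ring.
by rewrite sumoD sumoZ; ring.
Qed.

Lemma ler_sumo F G : (forall i, F i <= G i) -> sumo F <= sumo G.
Proof.
move=> FG; apply: (big_ind2 (fun a b => a <= b)) => [|a b c d|i _]; by [lra | lra | exact: FG].
Qed.

Lemma sumo_eq0 F : (forall i, F i = 0) -> sumo F = 0.
Proof. by move=> F0; apply: big1 => i _. Qed.

Lemma sumo_const c : sumo (fun _ : 'I_k => c) = INR k * c.
Proof.
rewrite /sumo big_const card_ord; elim: k => [|j IH] /=; first ring.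
by rewrite IH; case: j {IH} => [|j] /=; ring.
Qed.

Lemma sumo_only F i : (forall j, j != i -> F j = 0) -> sumo F = F i.
Proof. by move=> F0; rewrite /sumo (bigD1 i) //= big1 ?Rplus_0_r. Qed.

Lemma sumo_update F G i :
  (forall j, j != i -> F j = G j) -> sumo G = sumo F - F i + G i.
Proof.
move=> FG; rewrite /sumo (bigD1 i) //= [in RHS](bigD1 i) //=.
by rewrite (eq_bigr F) => [|j /FG]; [ring|].
Qed.
End FiniteSums.

Lemma exchange_sumo k l (F : 'I_k -> 'I_l -> R) :
  sumo (fun i => sumo (fun j => F i j)) = sumo (fun j => sumo (fun i => F i j)).
Proof. exact: exchange_big. Qed.

Lemma mul_sumo k l (F : 'I_k -> R) (G : 'I_l -> R) :
  sumo F * sumo G = sumo (fun a => sumo (fun c => F a * G c)).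
Proof.
rewrite Rmult_comm -sumoZ; apply: eq_sumo => a.
by rewrite Rmult_comm -sumoZ; apply: eq_sumo => c; ring.
Qed.

Lemma sqrt_mul_sqr t X : 0 <= X -> sqrt (t * (t * X)) = Rabs t * sqrt X.
Proof.
move=> X0; rewrite -Rmult_assoc sqrt_mult //; last exact: Rle_0_sqr.
by rewrite -sqrt_Rsqr_abs.
Qed.

Section Vectors.
Variable k : nat.
Implicit Types (u v w : vec k) (M : 'I_k -> 'I_k -> R).

Lemma ipvC u v : ipv u v = ipv v u.
Proof. by apply: eq_sumo => a; ring. Qed.

Lemma ipvDl u v w : ipv (vadd v w) u = ipv v u + ipv w u.
Proof. by rewrite /ipv -sumoD; apply: eq_sumo => a; rewrite /vadd; ring. Qed.

Lemma ipvDr u v w : ipv u (vadd v w) = ipv u v + ipv u w.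
Proof. by rewrite /ipv -sumoD; apply: eq_sumo => a; rewrite /vadd; ring. Qed.

Lemma ipvBl u v w : ipv (vsub v w) u = ipv v u - ipv w u.
Proof. by rewrite /ipv -sumoB; apply: eq_sumo => a; rewrite /vsub; ring. Qed.

Lemma ipvBr u v w : ipv u (vsub v w) = ipv u v - ipv u w.
Proof. by rewrite /ipv -sumoB; apply: eq_sumo => a; rewrite /vsub; ring. Qed.

Lemma ipvZl t u v : ipv (vscale t u) v = t * ipv u v.
Proof. by rewrite /ipv -sumoZ; apply: eq_sumo => a; rewrite /vscale; ring. Qed.

Lemma ipvZr t u v : ipv u (vscale t v) = t * ipv u v.
Proof. by rewrite /ipv -sumoZ; apply: eq_sumo => a; rewrite /vscale; ring. Qed.

Lemma ipv_ge0 u : 0 <= ipv u u.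
Proof.
rewrite -(sumo_eq0 (fun _ : 'I_k => 0)) //; apply: ler_sumo => a; exact: Rle_0_sqr.
Qed.

Lemma normv_sqr u : normv u * normv u = ipv u u.
Proof. exact/sqrt_sqrt/ipv_ge0. Qed.

Lemma normvZ t u : normv (vscale t u) = Rabs t * normv u.
Proof. by rewrite /normv ipvZl ipvZr sqrt_mul_sqr //; exact: ipv_ge0. Qed.

Definition bformv M u v : R := sumo (fun a => sumo (fun c => u a * M a c * v c)).

Lemma eq_qformv M u v : (forall a, u a = v a) -> qformv M u = qformv M v.
Proof. by move=> uv; apply: eq_sumo => a; apply: eq_sumo => c; rewrite !uv. Qed.

Lemma qformv_subC M u v : qformv M (vsub u v) = qformv M (vsub v u).
Proof. by apply: eq_sumo => a; apply: eq_sumo => c; rewrite /vsub; ring. Qed.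

Lemma qformv_shift M u v t :
  qformv M (fun a => u a + t * v a) =
  qformv M u + t * (bformv M u v + bformv M v u) + t * t * qformv M v.
Proof.
rewrite /qformv /bformv.
transitivity (sumo (fun a => sumo (fun c => u a * M a c * u c)
   + t * (sumo (fun c => u a * M a c * v c) + sumo (fun c => v a * M a c * u c))
   + t * t * sumo (fun c => v a * M a c * v c))).
  apply: eq_sumo => a; do 4 rewrite -?sumoZ -?sumoD.
  by apply: eq_sumo => c; ring.
by do 4 rewrite ?sumoD ?sumoZ.
Qed.

Lemma bformvC M u v : (forall a c, M a c = M c a) -> bformv M v u = bformv M u v.
Proof.
move=> Msym; rewrite /bformv exchange_sumo.
by apply: eq_sumo => a; apply: eq_sumo => c; rewrite Msym; ring.
Qed.

Lemma qformv_eq0 M u : (forall a, u a = 0) -> qformv M u = 0.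
Proof. by move=> u0; apply: sumo_eq0 => a; apply: sumo_eq0 => c; rewrite !u0; ring. Qed.

Lemma qformv_scalar (L : R) u :
  qformv (fun a c : 'I_k => if a == c then L else 0) u = L * ipv u u.
Proof.
rewrite /ipv -sumoZ; apply: eq_sumo => a.
rewrite (sumo_only _ a) ?eqxx => [|c ca]; first ring.
by rewrite eq_sym (negbTE ca); ring.
Qed.
End Vectors.

Section Blocks.
Variables (m : nat) (n : 'I_m -> nat).

Lemma bvec_ext (x y : bvec n) : (forall j a, x j a = y j a) -> x = y.
Proof.
move=> xy; apply: functional_extensionality_dep => j.
exact: functional_extensionality (xy j).
Qed.

Lemma setblk_eq (x : bvec n) i v : setblk x i v i = v.
Proof. by rewrite /setblk; case: eqP => // e; rewrite (eq_irrelevance e erefl). Qed.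

Lemma setblk_ne (x : bvec n) i v j : i != j -> setblk x i v j = x j.
Proof. by rewrite /setblk; case: eqP => // ->; rewrite eqxx. Qed.

Lemma setblk_id (x : bvec n) i : setblk x i (x i) = x.
Proof.
apply: bvec_ext => j; case: (eqVneq i j) => [<-|ij] a; first by rewrite setblk_eq.
by rewrite setblk_ne.
Qed.

Lemma sumo_setblk (x : bvec n) i (z : vec (n i)) (G : forall j, vec (n j) -> R) :
  sumo (fun j => G j (setblk x i z j)) =
  sumo (fun j => G j (x j)) - G i (x i) + G i z.
Proof.
rewrite (sumo_update (fun j => G j (x j)) _ i) ?setblk_eq // => j ji.
by rewrite setblk_ne // eq_sym.
Qed.

Definition bzero : bvec n := fun _ _ => 0.

Lemma bsub_setblk (x y : bvec n) i z :
  bsub (setblk x i z) y = setblk (bsub x y) i (vsub z (y i)).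
Proof.
apply: bvec_ext => j; case: (eqVneq i j) => [<-|ij] a.
  by rewrite /bsub !setblk_eq.
by rewrite /bsub !setblk_ne.
Qed.

Lemma bsub_setblk_id (x : bvec n) i z :
  bsub (setblk x i z) x = setblk bzero i (vsub z (x i)).
Proof.
apply: bvec_ext => j; case: (eqVneq i j) => [<-|ij] a.
  by rewrite /bsub !setblk_eq.
by rewrite /bsub !setblk_ne // /bzero; ring.
Qed.

Lemma blkdiag_diag (D : forall i, 'I_(n i) -> 'I_(n i) -> R) i a c :
  blkdiag n D i i a c = D i a c.
Proof. by rewrite /blkdiag; case: eqP => // e; rewrite (eq_irrelevance e erefl). Qed.

Lemma blkdiag_offdiag (D : forall i, 'I_(n i) -> 'I_(n i) -> R) i j a c :
  i != j -> blkdiag n D i j a c = 0.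
Proof. by rewrite /blkdiag; case: eqP => // ->; rewrite eqxx. Qed.

Lemma qformb_blkdiag (D : forall i, 'I_(n i) -> 'I_(n i) -> R) (y : bvec n) :
  qformb (blkdiag n D) y = sumo (fun i => qformv (D i) (y i)).
Proof.
apply: eq_sumo => i; rewrite (sumo_only _ i) => [|j ji].
  by apply: eq_sumo => a; apply: eq_sumo => c; rewrite blkdiag_diag.
apply: sumo_eq0 => a; apply: sumo_eq0 => c.
by rewrite blkdiag_offdiag 1?eq_sym //; ring.
Qed.

Lemma qformb_blkdiag_setblk0 (D : forall i, 'I_(n i) -> 'I_(n i) -> R) i v :
  qformb (blkdiag n D) (setblk bzero i v) = qformv (D i) v.
Proof.
rewrite qformb_blkdiag (sumo_only _ i) ?setblk_eq // => j ji.
by rewrite setblk_ne 1?eq_sym // qformv_eq0.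
Qed.

Lemma qformbB (M N : bmat n) y : qformb (bmsub M N) y = qformb M y - qformb N y.
Proof.
rewrite /qformb -sumoB; apply: eq_sumo => i; rewrite -sumoB; apply: eq_sumo => j.
rewrite -sumoB; apply: eq_sumo => a; rewrite -sumoB; apply: eq_sumo => c.
by rewrite /bmsub; ring.
Qed.

Lemma qformbZ t (M : bmat n) y : qformb (bmscale t M) y = t * qformb M y.
Proof.
rewrite /qformb -sumoZ; apply: eq_sumo => i; rewrite -sumoZ; apply: eq_sumo => j.
rewrite -sumoZ; apply: eq_sumo => a; rewrite -sumoZ; apply: eq_sumo => c.
by rewrite /bmscale; ring.
Qed.
End Blocks.

Section Constraints.
Variables (m : nat) (n : 'I_m -> nat) (q : nat).
Implicit Types A : blkA n q.

Lemma AimulB A i (u v : vec (n i)) :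
  Aimul A i (vsub u v) = vsub (Aimul A i u) (Aimul A i v).
Proof.
apply: functional_extensionality => l.
by rewrite /Aimul /vsub -sumoB; apply: eq_sumo => a; ring.
Qed.

Lemma AmulB A (x y : bvec n) l : Amul A (bsub x y) l = Amul A x l - Amul A y l.
Proof.
rewrite /Amul -sumoB; apply: eq_sumo => i; rewrite -sumoB; apply: eq_sumo => a.
by rewrite /bsub; ring.
Qed.

Lemma Amul_setblk A (x : bvec n) i (z : vec (n i)) l :
  Amul A (setblk x i z) l = Amul A x l + Aimul A i (vsub z (x i)) l.
Proof.
rewrite /Amul (sumo_setblk x i z (fun j v => sumo (fun a => A j l a * v a))).
by rewrite -/(Aimul A i z l) -/(Aimul A i (x i) l) AimulB /vsub; ring.
Qed.

Lemma Amul_setblk0 A i (v : vec (n i)) : Amul A (setblk (bzero n) i v) = Aimul A i v.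
Proof.
apply: functional_extensionality => l; rewrite Amul_setblk AimulB /vsub.
have -> : Amul A (bzero n) l = 0.
  by apply: sumo_eq0 => j; apply: sumo_eq0 => a; rewrite /bzero; ring.
have -> : Aimul A i (bzero n i) l = 0 by apply: sumo_eq0 => a; rewrite /bzero; ring.
ring.
Qed.

Lemma sumo_ipv_Aimul A (w : vec q) (y : bvec n) :
  sumo (fun i => ipv w (Aimul A i (y i))) = ipv w (Amul A y).
Proof.
rewrite /ipv /Amul /Aimul exchange_sumo.
by apply: eq_sumo => l; rewrite sumoZ.
Qed.

Lemma ipv_AiT A i (w : vec q) (u : vec (n i)) : ipv (AiT A i w) u = ipv w (Aimul A i u).
Proof.
rewrite /ipv /AiT /Aimul.
transitivity (sumo (fun a => sumo (fun l => A i l a * w l * u a))).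
  by apply: eq_sumo => a; rewrite Rmult_comm -sumoZ; apply: eq_sumo => l; ring.
by rewrite exchange_sumo; apply: eq_sumo => l; rewrite -sumoZ; apply: eq_sumo => a; ring.
Qed.

Lemma qformb_AtA A (y : bvec n) : qformb (AtA A) y = ipv (Amul A y) (Amul A y).
Proof.
rewrite /qformb /ipv /AtA /Amul.
transitivity (sumo (fun i => sumo (fun j => sumo (fun a => sumo (fun c =>
  sumo (fun l => (A i l a * y i a) * (A j l c * y j c))))))).
  apply: eq_sumo => i; apply: eq_sumo => j; apply: eq_sumo => a; apply: eq_sumo => c.
  by rewrite Rmult_comm -!sumoZ; apply: eq_sumo => l; ring.
under eq_sumo => i do under eq_sumo => j do under eq_sumo => a do rewrite exchange_sumo.
under eq_sumo => i do under eq_sumo => j do rewrite exchange_sumo.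
under eq_sumo => i do rewrite exchange_sumo.
rewrite exchange_sumo; apply: eq_sumo => l; rewrite mul_sumo.
by apply: eq_sumo => i; apply: eq_sumo => j; rewrite mul_sumo.
Qed.
End Constraints.

Lemma ge0_of_shifts_ge0 X Y : (forall t, 0 < t <= 1 -> 0 <= X + t * Y) -> 0 <= X.
Proof.
move=> shift; apply: Rnot_lt_le => X0.
have Yabs := Rle_abs Y; have Y0 := Rabs_pos Y.
pose t := - X / (Rabs Y - X).
have t_mul : t * (Rabs Y - X) = - X by rewrite /t; field; lra.
have t_pos : 0 < t by apply: Rdiv_lt_0_compat; lra.
have t_le1 : t <= 1 by nra.
have := shift t (conj t_pos t_le1); nra.
Qed.

Lemma le_of_le_addZ a b c : (forall eps, 0 < eps -> a <= b + eps * c) -> a <= b.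
Proof.
move=> near_b; apply: Rnot_lt_le => ba.
have cabs := Rle_abs c; have c0 := Rabs_pos c.
pose eps := (a - b) / (2 * (Rabs c + 1)).
have eps_mul : eps * (2 * (Rabs c + 1)) = a - b by rewrite /eps; field; lra.
have eps_pos : 0 < eps by apply: Rdiv_lt_0_compat; lra.
have := near_b eps eps_pos; nra.
Qed.

Lemma prox_three_point k (P : 'I_k -> 'I_k -> R) (dom : vec k -> Prop)
    (g : vec k -> R) (V xi z u : vec k) :
  sym_psd P -> convex_ext dom g -> dom z -> dom u ->
  (forall u', dom u' -> ipv V z + g z + / 2 * qformv P (vsub z xi)
                        <= ipv V u' + g u' + / 2 * qformv P (vsub u' xi)) ->
  ipv V z + g z + / 2 * qformv P (vsub z xi) + / 2 * qformv P (vsub u z)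
  <= ipv V u + g u + / 2 * qformv P (vsub u xi).
Proof.
move=> [Psym Ppsd] g_cvx zdom udom zmin.
set a := vsub z xi; set c := vsub u z.
have shifted t : qformv P (vsub (vadd (vscale t u) (vscale (1 - t) z)) xi)
    = qformv P a + t * (2 * bformv P a c) + t * t * qformv P c.
  have -> : 2 * bformv P a c = bformv P a c + bformv P c a.
    by rewrite (bformvC P a c Psym); ring.
  rewrite -qformv_shift; apply: eq_qformv => i.
  by rewrite /a /c /vsub /vadd /vscale; ring.
have first_order : 0 <= ipv V u + g u - (ipv V z + g z) + bformv P a c.
  apply: (@ge0_of_shifts_ge0 _ (/ 2 * qformv P c)) => t t01.
  have [tdom tg] := g_cvx u z t udom zdom (conj (Rlt_le _ _ (proj1 t01)) (proj2 t01)).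
  have := zmin _ tdom; rewrite ipvDr !ipvZr shifted -/a => zle.
  have cP := Ppsd c.
  apply: (Rmult_le_reg_l t); nra.
have := shifted 1; rewrite (_ : vsub (vadd _ _) xi = vsub u xi); last first.
  by apply: functional_extensionality => i; rewrite /vsub /vadd /vscale; ring.
lra.
Qed.

Section BlockNorm.
Variables (m : nat) (n : 'I_m -> nat).

Lemma ipb_ge0 (h : bvec n) : 0 <= ipb h h.
Proof.
rewrite -(sumo_eq0 (fun _ : 'I_m => 0)) //; apply: ler_sumo => j; exact: ipv_ge0.
Qed.

Lemma ipbZr t (u h : bvec n) : ipb u (bscale t h) = t * ipb u h.
Proof. by rewrite /ipb -sumoZ; apply: eq_sumo => j; exact: ipvZr. Qed.

Lemma normbZ t (h : bvec n) : normb (bscale t h) = Rabs t * normb h.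
Proof.
rewrite /normb (_ : ipb (bscale t h) (bscale t h) = t * (t * ipb h h)).
  by rewrite sqrt_mul_sqr //; exact: ipb_ge0.
by rewrite /ipb -!sumoZ; apply: eq_sumo => j; rewrite -ipvZr -ipvZl.
Qed.

Lemma ipb_setblk0 (u : bvec n) i (v : vec (n i)) : ipb u (setblk (bzero n) i v) = ipv (u i) v.
Proof.
rewrite /ipb (sumo_only _ i) ?setblk_eq // => j ji.
rewrite setblk_ne 1?eq_sym //; apply: sumo_eq0 => a; rewrite /bzero; ring.
Qed.

Lemma normb_setblk0 i (v : vec (n i)) : normb (setblk (bzero n) i v) = normv v.
Proof. by rewrite /normb ipb_setblk0 setblk_eq. Qed.
End BlockNorm.

Lemma convex_gradient_le m (n : 'I_m -> nat) (f : bvec n -> R) gradf :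
  convex_fun f -> has_gradient f gradf ->
  forall x y, ipb (gradf x) (bsub y x) <= f y - f x.
Proof.
move=> f_cvx f_grad x y; set h := bsub y x; set N := normb h.
have N0 : 0 <= N by exact: sqrt_pos.
apply: (@le_of_le_addZ _ _ N) => eps eps0.
have [d [d0 near_x]] := f_grad x eps eps0.
have d' : 0 < d / (N + 1) by apply: Rdiv_lt_0_compat; lra.
pose t := Rmin 1 (d / (N + 1) / 2).
have t01 : 0 < t <= 1 by split; [apply: Rmin_glb_lt; lra | exact: Rmin_l].
have tN : t * N < d.
  have : t * (N + 1) <= d / (N + 1) / 2 * (N + 1) by apply: Rmult_le_compat_r; [lra | exact: Rmin_r].
  rewrite (_ : d / (N + 1) / 2 * (N + 1) = d / 2); [lra | field; lra].
have step : badd x (bscale t h) = badd (bscale t y) (bscale (1 - t) x).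
  by apply: bvec_ext => j a; rewrite /badd /bscale /h /bsub; ring.
have := near_x (bscale t h); rewrite normbZ Rabs_pos_eq ?ipbZr -/N ?step; last lra.
move=> /(_ tN); rewrite -Rabs_Ropp => /(Rle_trans _ _ _ (Rle_abs _)) lin_lb.
have := f_cvx y x t (conj (Rlt_le _ _ (proj1 t01)) (proj2 t01)).
move=> cvx_ub; apply: (Rmult_le_reg_l t); lra.
Qed.

Lemma addblk_shift m (n : 'I_m -> nat) (x : bvec n) i (d : vec (n i)) t h :
  addblk x i (vscale (t + h) d)
  = badd (addblk x i (vscale t d)) (setblk (bzero n) i (vscale h d)).
Proof.
apply: bvec_ext => j; case: (eqVneq i j) => [<-|ij] a; rewrite /addblk /badd.
  by rewrite !setblk_eq /vadd /vscale; ring.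
by rewrite !setblk_ne // /bzero; ring.
Qed.

Lemma derivable_along_block m (n : 'I_m -> nat) (f : bvec n -> R) gradf
    (x : bvec n) i (d : vec (n i)) :
  has_gradient f gradf -> forall t,
  derivable_pt_lim (fun s => f (addblk x i (vscale s d))) t
                   (ipv (gradf (addblk x i (vscale t d)) i) d).
Proof.
move=> f_grad t eps eps0; set line := fun s => addblk x i (vscale s d).
set N := normv d; have N0 : 0 <= N by exact: sqrt_pos.
have eps' : 0 < eps / (N + 1) by apply: Rdiv_lt_0_compat; lra.
have shrink : eps / (N + 1) * N < eps.
  have : eps / (N + 1) * (N + 1) = eps by field; lra.
  nra.
have [dl [dl0 near_t]] := f_grad (line t) _ eps'.
have dl' : 0 < dl / (N + 1) by apply: Rdiv_lt_0_compat; lra.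
exists (mkposreal _ dl') => h h0 /= hsmall.
have hpos : 0 < Rabs h by exact: Rabs_pos_lt.
have Hsmall : Rabs h * N < dl.
  have : Rabs h * (N + 1) < dl / (N + 1) * (N + 1) by apply: Rmult_lt_compat_r; lra.
  rewrite (_ : dl / (N + 1) * (N + 1) = dl); [nra | field; lra].
have := near_t (setblk (bzero n) i (vscale h d)).
rewrite normb_setblk0 normvZ -/N ipb_setblk0 ipvZr /line -addblk_shift -/line.
move=> /(_ Hsmall) near_h.
rewrite (_ : (f (line (t + h)) - f (line t)) / h - ipv (gradf (line t) i) d
           = (f (line (t + h)) - f (line t) - h * ipv (gradf (line t) i) d) / h);
  last by field.
rewrite /Rdiv Rabs_mult Rabs_inv; apply: (Rmult_lt_reg_r (Rabs h)) => //.
rewrite Rmult_assoc Rinv_l; last lra.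
have := Rmult_lt_compat_r _ _ _ hpos shrink.
rewrite /line /=; lra.
Qed.

Lemma ipv_le_of_normv_le k (u d : vec k) K :
  0 < K -> normv u <= K * normv d -> ipv u d <= K * ipv d d.
Proof.
move=> K0 ud.
have : 0 <= ipv (vsub u (vscale K d)) (vsub u (vscale K d)) by exact: ipv_ge0.
rewrite ipvBl !ipvBr !ipvZl !ipvZr (ipvC d u).
have u0 : 0 <= normv u by exact: sqrt_pos.
have : normv u * normv u <= (K * normv d) * (K * normv d) by apply: Rmult_le_compat.
rewrite normv_sqr (_ : (K * normv d) * (K * normv d) = K * K * (normv d * normv d)); last ring.
rewrite normv_sqr; nra.
Qed.

Lemma block_descent m (n : 'I_m -> nat) (f : bvec n -> R) gradf Lc Lr
    (x : bvec n) i (z : vec (n i)) :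
  has_gradient f gradf -> grad_lipschitz gradf Lc Lr ->
  f (setblk x i z) <= f x + ipv (gradf x i) (vsub z (x i))
                      + Lc i / 2 * ipv (vsub z (x i)) (vsub z (x i)).
Proof.
move=> f_grad [Lc0 [block_lip _]].
set d := vsub z (x i); set l0 := ipv (gradf x i) d; set K := Lc i / 2 * ipv d d.
pose line t := addblk x i (vscale t d).
pose psi t := f (line t) - (l0 * t + K * (t * t)).
pose dpsi t := ipv (gradf (line t) i) d - (l0 + 2 * K * t).
have psi_deriv t : derivable_pt_lim psi t (dpsi t).
  apply: derivable_pt_lim_minus; first exact: derivable_along_block.
  have := derivable_pt_lim_plus _ _ t _ _
    (derivable_pt_lim_scal _ l0 t _ (derivable_pt_lim_id t))
    (derivable_pt_lim_scal _ K t _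
       (derivable_pt_lim_mult _ _ t _ _ (derivable_pt_lim_id t) (derivable_pt_lim_id t))).
  by rewrite /id (_ : l0 * 1 + K * (1 * t + t * 1) = l0 + 2 * K * t) //; ring.
have [c [psi01 c01]] := MVT_cor2 psi dpsi 0 1 Rlt_0_1 (fun c _ => psi_deriv c).
have dpsi_le0 : dpsi c <= 0.
  have cL : 0 < Lc i * c by apply: Rmult_lt_0_compat; [exact: Lc0 | lra].
  have lip := block_lip x i (vscale c d).
  rewrite normvZ Rabs_pos_eq -?Rmult_assoc in lip; last lra.
  have := ipv_le_of_normv_le _ _ cL lip.
  rewrite ipvBl /dpsi /K /l0 /line; lra.
have line0 : line 0 = x.
  rewrite /line /addblk -[RHS](setblk_id x i); congr setblk.
  by apply: functional_extensionality => a; rewrite /vadd /vscale; ring.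
have line1 : line 1 = setblk x i z.
  rewrite /line /addblk; congr setblk.
  by apply: functional_extensionality => a; rewrite /vadd /vscale /d /vsub; ring.
have : psi 1 - psi 0 <= 0 by rewrite psi01; nra.
by rewrite /psi line0 line1; lra.
Qed.

Section OneStep.
Variables (m : nat) (n : 'I_m -> nat) (q : nat).
Variables (f : bvec n -> R) (gradf : bvec n -> bvec n).
Variables (g : forall i, vec (n i) -> R) (dom : forall i, vec (n i) -> Prop).
Variables (A : blkA n q) (Lc : 'I_m -> R) (Lr beta rho : R).
Variable P : forall i, 'I_(n i) -> 'I_(n i) -> R.
(* [Set Implicit Arguments] would otherwise make their block index implicit. *)
Arguments gradf : clear implicits.
Arguments g : clear implicits.
Arguments dom : clear implicits.
Arguments A : clear implicits.
Arguments P : clear implicits.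

Definition lagrangian_lin_gap (s : state n q) (xb : bvec n) (i : 'I_m) : R :=
  ipv (gradf (sx s) i) (vsub (xb i) (sx s i)) + g i (xb i) - g i (sx s i)
  - ipv (vsub (sl s) (vscale beta (sr s))) (Aimul A i (vsub (xb i) (sx s i))).

Lemma Fobj_setblk (x : bvec n) i z :
  Fobj f g (setblk x i z) = f (setblk x i z) + sumo (fun j => g j (x j)) - g i (x i) + g i z.
Proof. by rewrite /Fobj (sumo_setblk x i z g); ring. Qed.

Lemma qformb_blkdiag_setblk (x y : bvec n) i z :
  qformb (blkdiag n P) (bsub (setblk x i z) y)
  = qformb (blkdiag n P) (bsub x y) - qformv (P i) (vsub (x i) (y i))
    + qformv (P i) (vsub z (y i)).
Proof.
by rewrite bsub_setblk !qformb_blkdiag (sumo_setblk (bsub x y) i _ (fun j => qformv (P j))).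
Qed.

Lemma qformb_step_metric (x : bvec n) i z :
  qformb (bmsub (bmsub (blkdiag n P) (Lmat n Lc)) (bmscale beta (AtA A)))
         (bsub (setblk x i z) x)
  = qformv (P i) (vsub z (x i)) - Lc i * ipv (vsub z (x i)) (vsub z (x i))
    - beta * ipv (Aimul A i (vsub z (x i))) (Aimul A i (vsub z (x i))).
Proof.
by rewrite bsub_setblk_id !qformbB qformbZ !qformb_blkdiag_setblk0 qformv_scalar qformb_AtA
  Amul_setblk0.
Qed.

Lemma alg_step_bound (s : state n q) (xb : bvec n) i z :
  has_gradient f gradf -> grad_lipschitz gradf Lc Lr -> sym_psd (P i) ->
  convex_ext (dom i) (g i) -> dom i (xb i) ->
  is_argmin_blk gradf g dom A beta P s i z ->
  let s1 := alg_step A rho s i z in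
  let Pm := blkdiag n P in
  let M := bmsub (bmsub Pm (Lmat n Lc)) (bmscale beta (AtA A)) in
  Fobj f g (sx s1) - Fobj f g xb - ipv (sl s1) (sr s1)
    + (beta - rho) * ipv (sr s1) (sr s1) - beta / 2 * ipv (sr s1) (sr s1)
  + / 2 * (qformb Pm (bsub (sx s1) xb) + qformb M (bsub (sx s1) (sx s)))
  <= Fobj f g (sx s) - Fobj f g xb - ipv (sl s) (sr s)
     + beta / 2 * ipv (sr s) (sr s) + / 2 * qformb Pm (bsub (sx s) xb)
     + lagrangian_lin_gap s xb i.
Proof.
case: s => x r lam f_grad f_lip P_psd g_cvx xb_dom [z_dom z_min] /=.
rewrite /subobj /= in z_min.
rewrite /lagrangian_lin_gap /= Fobj_setblk qformb_blkdiag_setblk qformb_step_metric.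
set e := Aimul A i (vsub z (x i)); set w := vsub lam (vscale beta r) in z_min *.
have w_e : ipv w e = ipv lam e - beta * ipv r e by rewrite /w ipvBl ipvZl.
clearbody w; set V := vsub (gradf x i) (AiT A i w) in z_min.
have descent := block_descent x i z f_grad f_lip.
have three_point := prox_three_point (xb i) P_psd g_cvx z_dom xb_dom z_min.
have V_split u : ipv V u = ipv (gradf x i) (vsub u (x i))
    - ipv w (Aimul A i (vsub u (x i))) + ipv V (x i).
  by rewrite /V !ipvBl !ipv_AiT AimulB !ipvBr; ring.
rewrite (V_split z) (V_split (xb i)) (qformv_subC (P i) (xb i) z) -/e in three_point.
rewrite (qformv_subC (P i) (x i) (xb i)).
have lam_r1 : ipv (vsub lam (vscale rho (vadd r e))) (vadd r e)
    = ipv lam r + ipv lam e - rho * (ipv r r + 2 * ipv r e + ipv e e).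
  by rewrite ipvBl ipvZl !ipvDr !ipvDl (ipvC e r); ring.
have r1_r1 : ipv (vadd r e) (vadd r e) = ipv r r + 2 * ipv r e + ipv e e.
  by rewrite !ipvDr !ipvDl (ipvC e r); ring.
rewrite lam_r1 r1_r1 /Fobj; lra.
Qed.

Lemma sumo_lagrangian_lin_gap (s : state n q) (b : vec q) (xb : bvec n) :
  convex_fun f -> has_gradient f gradf ->
  (forall l, sr s l = Amul A (sx s) l - b l) -> (forall l, Amul A xb l = b l) ->
  sumo (lagrangian_lin_gap s xb)
  <= - (Fobj f g (sx s) - Fobj f g xb - ipv (sl s) (sr s) + beta * ipv (sr s) (sr s)).
Proof.
case: s => x r lam f_cvx f_grad /= r_def xb_feas.
have primal : sumo (fun i => ipv (gradf x i) (vsub (xb i) (x i))) <= f xb - f x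
  := convex_gradient_le f_cvx f_grad x xb.
have dual : sumo (fun i => ipv (vsub lam (vscale beta r)) (Aimul A i (vsub (xb i) (x i))))
            = - ipv lam r + beta * ipv r r.
  have Ad : Amul A (bsub xb x) = vscale (-1) r.
    by apply: functional_extensionality => l; rewrite AmulB xb_feas /vscale r_def; ring.
  by rewrite (sumo_ipv_Aimul A _ (bsub xb x)) Ad ipvZr ipvBl ipvZl; ring.
rewrite /lagrangian_lin_gap /= !sumoB sumoD dual /Fobj; lra.
Qed.
End OneStep.

Lemma alg_traj_residual m (n : 'I_m -> nat) q (A : blkA n q) b rho x0 sel h l :
  sr (alg_traj A b rho x0 sel h) l = Amul A (sx (alg_traj A b rho x0 sel h)) l - b l.
Proof.
elim: h l => [|i h IH] l //=.
by rewrite /vadd Amul_setblk IH; ring.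
Qed.

Lemma EunifD m (F G : 'I_m -> R) : Eunif (fun i => F i + G i) = Eunif F + Eunif G.
Proof. by rewrite /Eunif sumoD; ring. Qed.

Lemma EunifZ m c (F : 'I_m -> R) : Eunif (fun i => c * F i) = c * Eunif F.
Proof. by rewrite /Eunif sumoZ; ring. Qed.

Lemma Eunif_le_shift m c (F D : 'I_m -> R) : (0 < m)%nat ->
  (forall i, F i <= c + D i) -> Eunif F <= c + Eunif D.
Proof.
move=> m0 FD; have m0R : 0 < INR m by apply/lt_0_INR/ssrnat.ltP.
have -> : c + Eunif D = Eunif (fun i => c + D i).
  by rewrite /Eunif sumoD sumo_const; field; lra.
apply: Rmult_le_compat_l; [exact/Rlt_le/Rinv_0_lt_compat | exact: ler_sumo].
Qed.

Theorem mainTheorem4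
  (m : nat) (n : 'I_m -> nat) (q : nat)
  (f : bvec n -> R) (gradf : bvec n -> bvec n)
  (g : forall i : 'I_m, vec (n i) -> R) (dom : forall i : 'I_m, vec (n i) -> Prop)
  (A : blkA n q) (b : vec q) (Lc : 'I_m -> R) (Lr : R)
  (beta rho : R) (P : forall i : 'I_m, 'I_(n i) -> 'I_(n i) -> R)
  (x0 : bvec n) (sel : seq 'I_m -> forall i : 'I_m, vec (n i)) :
  (0 < m)%nat ->
  convex_fun f -> has_gradient f gradf -> continuous_grad gradf ->
  grad_lipschitz gradf Lc Lr ->
  (forall i, proper_ext (dom i) /\ convex_ext (dom i) (g i) /\ lsc_ext (dom i) (g i)) ->
  0 < beta -> 0 < rho ->
  (forall i, sym_psd (P i)) ->
  (forall i, dom i (x0 i)) ->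
  (* each update picks a minimizer of the block subproblem *)
  (forall (h : seq 'I_m) (i : 'I_m),
     is_argmin_blk gradf g dom A beta P (alg_traj A b rho x0 sel h) i (sel h i)) ->
  forall (h : seq 'I_m) (x : bvec n),
    (forall l, Amul A x l = b l) -> (forall i, dom i (x i)) ->
    let s := alg_traj A b rho x0 sel h in
    let s1 (i : 'I_m) := alg_step A rho s i (sel h i) in
    let Pm := @blkdiag m n P in
    let M := bmsub (bmsub Pm (Lmat n Lc)) (bmscale beta (AtA A)) in
    Eunif (fun i => Fobj f g (sx (s1 i)) - Fobj f g x - ipv (sl (s1 i)) (sr (s1 i))
                    + (beta - rho) * ipv (sr (s1 i)) (sr (s1 i))
                    - beta / 2 * ipv (sr (s1 i)) (sr (s1 i)))
    + / 2 * Eunif (fun i => qformb Pm (bsub (sx (s1 i)) x)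
                            + qformb M (bsub (sx (s1 i)) (sx s)))
    <= (1 - / INR m) * (Fobj f g (sx s) - Fobj f g x - ipv (sl s) (sr s)
                        + beta * ipv (sr s) (sr s))
       - beta / 2 * ipv (sr s) (sr s) + / 2 * qformb Pm (bsub (sx s) x).
Proof.
move=> m0 f_cvx f_grad _ f_lip g_props _ _ P_psd _ sel_min h xb xb_feas xb_dom s s1 Pm M.
rewrite -EunifZ -EunifD.
have g_cvx i : convex_ext (dom i) (g i) by case: (g_props i) => _ [].
apply: (Rle_trans _ _ _ (Eunif_le_shift _ (lagrangian_lin_gap gradf g A beta s xb) m0 _)).
  move=> i.
  exact: (alg_step_bound rho xb f_grad f_lip (P_psd i) (g_cvx i) (xb_dom i) (sel_min h i)).
have := sumo_lagrangian_lin_gap g beta s b f_cvx f_grad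
  (alg_traj_residual A b rho x0 sel h) xb_feas.
have m_inv : 0 <= / INR m by apply/Rlt_le/Rinv_0_lt_compat/lt_0_INR/ssrnat.ltP.
move=> /(Rmult_le_compat_l _ _ _ m_inv).
rewrite /Eunif /s /Pm; lra.
Qed.
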